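(* Let $X$ be a nonempty set, let $n\geq 1$, and let $f_1,\dots,f_n:X\to\mathbb{R}$ be arbitrary functions. Then there exists $(\lambda_1,\dots,\lambda_n)\in S_n$ such that \[ 0\leq \lambda_1 f_1(x)+\dots+\lambda_n f_n(x)\qquad (x\in X) \] if and only if \[ 0\leq \max_{i\in\{1,\dots,n\}}\big(t_1 f_i(x_1)+\dots+t_n f_i(x_n)\big)\qquad (x_1,\dots,x_n\in X,\ (t_1,\dots,t_n)\in S_n). \]
   Context: For a positive integer $n$, $S_n$ denotes the simplex $\{(\lambda_1,\dots,\lambda_n)\in\mathbb{R}^n \mid \lambda_1,\dots,\lambda_n\geq 0,\ \lambda_1+\dots+\lambda_n=1\}$. *)

From mathcomp Require Import all_boot all_order all_algebra.
From mathcomp Require Import reals.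
Set Implicit Arguments. Unset Strict Implicit. Unset Printing Implicit Defensive.
Import Order.TTheory GRing.Theory Num.Theory.
Local Open Scope ring_scope.

Definition simplex (R : realType) (n : nat) (l : 'I_n -> R) : Prop :=
  (forall i, 0 <= l i) /\ \sum_(i < n) l i = 1.

Definition maxI (R : realType) (n : nat) (g : 'I_n.+1 -> R) : R :=
  \big[Num.max/g ord0]_(i < n.+1) g i.

From mathcomp Require Import all_boot all_order all_algebra.
From mathcomp Require Import classical_sets reals.
From mathcomp Require Import ring lra.
Set Implicit Arguments. Unset Strict Implicit. Unset Printing Implicit Defensive.
Import Order.TTheory GRing.Theory Num.Theory.
Local Open Scope ring_scope.

(* The forward direction is averaging: sum_i l_i (sum_j t_j f_i(x_j)) is
   nonnegative and bounded by the maximum over i.  Conversely, the nonnegative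
   combinations c_i = sum_j w_j f_i(x_j) form a convex cone in R^n; by
   Caratheodory's lemma each uses at most n points, so the hypothesis says that
   every point of the cone has a nonnegative coordinate.  Such a cone is
   supported by a vector of the simplex.  This is proved by induction on n,
   replacing the first two coordinates by mu c_1 + (1 - mu) c_2; the right mu
   exists because, in the plane, every lower constraint on mu lies below every
   upper constraint, as a suitable positive mix of the two witnessing points
   has equal coordinates. *)

Lemma lin_rel_gt_dim (F : fieldType) n k (c : 'I_k -> 'I_n -> F) : (n < k)%N ->
  exists2 a : 'I_k -> F, (exists j, a j != 0) & forall i, \sum_j a j * c j i = 0.
Proof.
move=> ltnk; pose A := \matrix_(j < k, i < n) c j i.
have : kermx A != 0.
  rewrite -mxrank_eq0 mxrank_ker subn_eq0 -ltnNge.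
  exact: leq_ltn_trans (rank_leq_col A) ltnk.
case/rowV0Pn => v /sub_kermxP vA /rV0Pn [j vj].
exists (fun j => v 0 j); first by exists j.
move=> i; have := congr1 (fun M : 'rV_n => M 0 i) vA; rewrite !mxE => vAi.
by rewrite -[RHS]vAi; apply: eq_bigr => l _; rewrite mxE.
Qed.

Lemma caratheodory_step (R : realFieldType) n k (c : 'I_k.+1 -> 'I_n -> R)
    (w : 'I_k.+1 -> R) : (n <= k)%N -> (forall j, 0 <= w j) ->
  exists p (w' : 'I_k.+1 -> R), [/\ forall j, 0 <= w' j, w' p = 0 &
    forall i, \sum_j w' j * c j i = \sum_j w j * c j i].
Proof.
move=> lenk w_ge0.
have [b [j1 bj1_gt0] b_rel] : exists2 b : 'I_k.+1 -> R, (exists j, 0 < b j) &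
    forall i, \sum_j b j * c j i = 0.
  have [a [j0 aj0_neq0] a_rel] := lin_rel_gt_dim c lenk.
  have [aj0_gt0|aj0_le0] := ltP 0 (a j0); first by exists a => //; exists j0.
  exists (fun j => - a j); first by exists j0; rewrite oppr_gt0 lt_neqAle aj0_neq0.
  by move=> i; under eq_bigr do rewrite mulNr; rewrite sumrN a_rel oppr0.
(* Move along -b until the first weight vanishes. *)
case: (@arg_minP _ _ _ j1 (fun j => 0 < b j) (fun j => w j / b j) bj1_gt0).
move=> p bp_gt0 p_min; pose e := w p / b p.
exists p, (fun j => w j - e * b j); split.
- move=> j; rewrite subr_ge0; have [bj_gt0|bj_le0] := ltP 0 (b j).
    by rewrite -ler_pdivlMr // p_min.
  exact: le_trans (mulr_ge0_le0 (divr_ge0 (w_ge0 p) (ltW bp_gt0)) bj_le0) (w_ge0 j).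
- by rewrite /e divfK ?subrr // gt_eqF.
- move=> i; under eq_bigr do rewrite mulrBl -mulrA.
  by rewrite sumrB -mulr_sumr b_rel mulr0 subr0.
Qed.

Section Mixtures.
Variables (R : realFieldType) (X : Type).

Definition mixture n k (f : 'I_n -> X -> R) (w : 'I_k -> R) (xs : 'I_k -> X)
  (i : 'I_n) : R := \sum_(j < k) w j * f i (xs j).

Definition mixtures_nonneg_coord n (f : 'I_n -> X -> R) k : Prop :=
  forall (w : 'I_k -> R) (xs : 'I_k -> X), (forall j, 0 <= w j) ->
  exists i, 0 <= mixture f w xs i.

Definition join_fun T k k' (u : 'I_k -> T) (v : 'I_k' -> T) (j : 'I_(k + k')) :=
  match split j with inl a => u a | inr b => v b end.

Lemma mixture_join n (f : 'I_n -> X -> R) k k' a b w w' xs xs' i :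
  mixture f (join_fun (fun j : 'I_k => a * w j) (fun j : 'I_k' => b * w' j))
    (join_fun xs xs') i = a * mixture f w xs i + b * mixture f w' xs' i.
Proof.
rewrite /mixture big_split_ord !mulr_sumr /join_fun.
congr (_ + _); apply: eq_bigr => j _.
  by rewrite -[lshift _ _]/(unsplit (inl _ _)) unsplitK mulrA.
by rewrite -[rshift _ _]/(unsplit (inr _ _)) unsplitK mulrA.
Qed.

Lemma mixtures_nonneg_coord_pred n (f : 'I_n -> X -> R) k (x0 : X) :
  mixtures_nonneg_coord f k.+1 -> mixtures_nonneg_coord f k.
Proof.
move=> fk1 w xs w_ge0.
pose w1 j := if unlift ord0 j is Some j' then w j' else 0.
pose xs1 j := if unlift ord0 j is Some j' then xs j' else x0.
have [|i mix_ge0] := fk1 w1 xs1; first by move=> j; rewrite /w1; case: unlift.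
exists i; move: mix_ge0; rewrite /mixture big_ord_recl /w1 /xs1 unlift_none mul0r add0r.
by under eq_bigr do rewrite liftK.
Qed.

Lemma mixtures_nonneg_coord_succ n (f : 'I_n -> X -> R) k : (n <= k)%N ->
  mixtures_nonneg_coord f k -> mixtures_nonneg_coord f k.+1.
Proof.
move=> lenk fk w xs w_ge0.
have [p [w' [w'_ge0 w'p mix_w']]] :=
  caratheodory_step (fun j i => f i (xs j)) lenk w_ge0.
have [i mix_ge0] := fk (fun j => w' (lift p j)) (fun j => xs (lift p j)) (fun j => w'_ge0 _).
by exists i; rewrite /mixture -mix_w' (bigD1_ord p) //= w'p mul0r add0r.
Qed.

Lemma mixtures_nonneg_coord_le n (f : 'I_n -> X -> R) k k' (x0 : X) : (k <= k')%N ->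
  mixtures_nonneg_coord f k' -> mixtures_nonneg_coord f k.
Proof.
elim: k' => [|k' IH]; first by rewrite leqn0 => /eqP->.
rewrite leq_eqVlt => /orP[/eqP->//|]; rewrite ltnS => lekk' fk'.
exact/IH/(mixtures_nonneg_coord_pred x0).
Qed.

Lemma mixtures_nonneg_coord_ge n (f : 'I_n -> X -> R) k : (n <= k)%N ->
  mixtures_nonneg_coord f n -> mixtures_nonneg_coord f k.
Proof.
elim: k => [|k IH]; first by rewrite leqn0 => /eqP n0; subst n.
rewrite leq_eqVlt => /orP[/eqP n_eq|]; first by subst n.
rewrite ltnS => lenk fn.
exact/mixtures_nonneg_coord_succ/IH.
Qed.

Lemma mixtures_nonneg_coord_all n (f : 'I_n -> X -> R) (x0 : X) :
  mixtures_nonneg_coord f n -> forall k, mixtures_nonneg_coord f k.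
Proof.
move=> fn k; have [lekn|/ltnW lenk] := leqP k n.
  exact: mixtures_nonneg_coord_le x0 lekn fn.
exact: mixtures_nonneg_coord_ge lenk fn.
Qed.

End Mixtures.

Lemma quadrant_separation (R : realType) (P : R -> R -> Prop) :
  (forall u v, P u v -> 0 <= u \/ 0 <= v) ->
  (forall a b u v u' v', 0 < a -> 0 < b -> P u v -> P u' v' ->
     P (a * u + b * u') (a * v + b * v')) ->
  exists2 mu, 0 <= mu <= 1 & forall u v, P u v -> 0 <= mu * u + (1 - mu) * v.
Proof.
move=> P_quad P_conic.
have P_ge0l u v : P u v -> v < 0 -> 0 <= u.
  by move=> /P_quad[//|v_ge0] /lt_geF; rewrite v_ge0.
have P_ge0r u v : P u v -> u < 0 -> 0 <= v.
  by move=> /P_quad[u_ge0 /lt_geF|//]; rewrite u_ge0.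
(* The admissible mu are those between all the lower bounds -v/(u-v) (v < 0)
   and all the upper bounds v/(v-u) (u < 0); take the sup of the lower ones. *)
pose E mu := mu = 0 \/ exists u v, [/\ P u v, v < 0 & mu = - v / (u - v)].
have E_le1 e : E e -> e <= 1.
  case=> [->|[u [v [Puv v_lt0 ->]]]]; first exact: ler01.
  by have := P_ge0l _ _ Puv v_lt0 => u_ge0; rewrite ler_pdivrMr; lra.
have E_le_upper u v : P u v -> u < 0 -> forall e, E e -> e <= v / (v - u).
  move=> Puv u_lt0 e; have v_ge0 := P_ge0r _ _ Puv u_lt0.
  case=> [->|[u' [v' [Pu'v' v'_lt0 ->]]]]; first by rewrite divr_ge0 //; lra.
  have u'_ge0 := P_ge0l _ _ Pu'v' v'_lt0.
  (* Mixing the two points so that both coordinates agree gives u' v - u v' >= 0. *)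
  have a_gt0 : 0 < u' - v' by lra.
  have b_gt0 : 0 < v - u by lra.
  have cross : P (u' * v - u * v') (u' * v - u * v').
    have := P_conic _ _ _ _ _ _ a_gt0 b_gt0 Puv Pu'v'.
    have [-> ->] : (u' - v') * u + (v - u) * u' = u' * v - u * v' /\
      (u' - v') * v + (v - u) * v' = u' * v - u * v' by split; ring.
    done.
  have cross_ge0 : 0 <= u' * v - u * v' by case: (P_quad _ _ cross).
  by rewrite ler_pdivrMr // mulrAC ler_pdivlMr //; nra.
have supE : has_sup E by split; [exists 0; left | exists 1 => e /E_le1].
have sup_ge0 : 0 <= sup E by apply: sup_upper_bound supE _ _; left.
have sup_le1 : sup E <= 1 by apply: ge_sup; [exists 0; left | move=> e /E_le1].
exists (sup E); first by rewrite sup_ge0 sup_le1.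
move=> u v Puv; have [v_lt0|v_ge0] := ltP v 0.
  have u_ge0 := P_ge0l _ _ Puv v_lt0.
  have : - v / (u - v) <= sup E by apply: sup_upper_bound supE _ _; right; exists u, v.
  by rewrite ler_pdivrMr; lra.
have [u_lt0|u_ge0] := ltP u 0; last by nra.
have : sup E <= v / (v - u).
  by apply: ge_sup; [exists 0; left | exact: E_le_upper].
by rewrite ler_pdivlMr; lra.
Qed.

Section MergeFirstTwo.
Variables (R : comRingType) (n : nat) (mu : R).

Definition merge2 (c : 'I_n.+2 -> R) (i : 'I_n.+1) : R :=
  if unlift ord0 i is Some _ then c (lift ord0 i)
  else mu * c ord0 + (1 - mu) * c (lift ord0 ord0).

Definition unmerge2 (l : 'I_n.+1 -> R) (j : 'I_n.+2) : R :=
  if unlift ord0 j is Some i then (if unlift ord0 i is Some _ then l i else (1 - mu) * l ord0)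
  else mu * l ord0.

Lemma sum_unmerge2 l c :
  \sum_j unmerge2 l j * c j = \sum_i l i * merge2 c i.
Proof.
rewrite !big_ord_recl /unmerge2 /merge2 !unlift_none liftK unlift_none.
under eq_bigr do rewrite !liftK.
under [in RHS]eq_bigr do rewrite liftK.
ring.
Qed.

End MergeFirstTwo.

Section OrthantSeparation.
Variable R : realType.

Definition conic n (C : ('I_n -> R) -> Prop) :=
  forall a b c d, 0 < a -> 0 < b -> C c -> C d -> C (fun i => a * c i + b * d i).

Lemma simplex_unmerge2 n mu (l : 'I_n.+1 -> R) :
  0 <= mu <= 1 -> simplex l -> simplex (unmerge2 mu l).
Proof.
move=> /andP[mu_ge0 mu_le1] [l_ge0 l_sum]; split.
  move=> j; rewrite /unmerge2; case: unlift => [i|]; last exact: mulr_ge0.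
  by case: unlift => [_|] //; rewrite mulr_ge0 ?subr_ge0.
rewrite -l_sum; under eq_bigr do rewrite -[unmerge2 _ _ _]mulr1.
rewrite sum_unmerge2; apply: eq_bigr => i _.
by rewrite /merge2; case: unlift => [_|]; rewrite ?mulr1 // subrKC mulr1.
Qed.

Lemma orthant_separation n (C : ('I_n.+1 -> R) -> Prop) : conic C ->
    (forall c, C c -> exists i, 0 <= c i) ->
  exists2 l, simplex l & forall c, C c -> 0 <= \sum_i l i * c i.
Proof.
elim: n C => [|n IH] C C_conic C_nonneg.
  exists (fun=> 1); first by split=> [_|]; rewrite ?big_ord1 ?ler01.
  by move=> c /C_nonneg[i]; rewrite big_ord1 mul1r (ord1 i).
pose tail2 (c : 'I_n.+2 -> R) (i : 'I_n) := c (lift ord0 (lift ord0 i)).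
pose P u v := exists c, [/\ C c, forall i, tail2 c i < 0, u = c ord0 &
  v = c (lift ord0 ord0)].
have [mu mu01 mu_sep] : exists2 mu, 0 <= mu <= 1 &
    forall u v, P u v -> 0 <= mu * u + (1 - mu) * v.
  apply: quadrant_separation.
    move=> _ _ [c [/C_nonneg[i ci_ge0] tail_lt0 -> ->]].
    case: (unliftP ord0 i) ci_ge0 => [j ->|->]; last by left.
    case: (unliftP ord0 j) => [k ->|->]; last by right.
    by move=> ck_ge0; have := tail_lt0 k; rewrite /tail2 ltNge ck_ge0.
  move=> a b _ _ _ _ a_gt0 b_gt0 [c [Cc c_lt0 -> ->]] [d [Cd d_lt0 -> ->]].
  exists (fun i => a * c i + b * d i); split => // [|i].
    exact: C_conic.
  by have := c_lt0 i; have := d_lt0 i; rewrite /tail2; nra.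
pose C' d := exists2 c, C c & d =1 merge2 mu c.
have C'_conic : conic C'.
  move=> a b d d' a_gt0 b_gt0 [c Cc dc] [c' Cc' dc'].
  exists (fun i => a * c i + b * c' i); first exact: C_conic.
  by move=> i; rewrite dc dc' /merge2; case: unlift => [_|]; ring.
have C'_nonneg d : C' d -> exists i, 0 <= d i.
  move=> [c Cc dc]; case: (boolP [exists i, 0 <= tail2 c i]).
    by case/existsP => i ci_ge0; exists (lift ord0 i); rewrite dc /merge2 liftK.
  rewrite negb_exists => /forallP c_tail_lt0; exists ord0.
  rewrite dc /merge2 unlift_none; apply: mu_sep; exists c.
  by split=> // i; rewrite ltNge c_tail_lt0.
have [l' l'_simplex l'_sep] := IH C' C'_conic C'_nonneg.
exists (unmerge2 mu l'); first exact: simplex_unmerge2.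
by move=> c Cc; rewrite sum_unmerge2; apply: l'_sep; exists c.
Qed.

End OrthantSeparation.

Section MaxI.
Variable R : realType.

Lemma exists_ge0_of_maxI n (g : 'I_n.+1 -> R) : 0 <= maxI g -> exists i, 0 <= g i.
Proof.
move=> maxI_ge0; case: (boolP [exists i, 0 <= g i]) => [/existsP //|].
rewrite negb_exists => /forallP g_lt0.
have : maxI g < 0 by apply: bigmax_lt => [|i _]; rewrite ltNge g_lt0.
by rewrite ltNge maxI_ge0.
Qed.

Lemma simplex_sum_le_maxI n (l g : 'I_n.+1 -> R) :
  simplex l -> \sum_i l i * g i <= maxI g.
Proof.
move=> [l_ge0 l_sum]; rewrite -[maxI g]mul1r -l_sum mulr_suml.
by apply: ler_sum => i _; rewrite ler_wpM2l // le_bigmax.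
Qed.

End MaxI.

Section SimplexMixtures.
Variables (R : realType) (X : Type).

Lemma maxI_mixture_ge0 n (f : 'I_n.+1 -> X -> R) l k (w : 'I_k -> R) xs :
  simplex l -> (forall x, 0 <= \sum_i l i * f i x) -> (forall j, 0 <= w j) ->
  0 <= maxI (mixture f w xs).
Proof.
move=> l_simplex l_sep w_ge0; apply: le_trans (simplex_sum_le_maxI _ l_simplex).
rewrite /mixture; under eq_bigr do rewrite mulr_sumr.
rewrite exchange_big /=; apply: sumr_ge0 => j _.
under eq_bigr do rewrite mulrCA.
by rewrite -mulr_sumr mulr_ge0.
Qed.

Lemma mixtures_nonneg_coord_of_maxI n (f : 'I_n.+1 -> X -> R) :
  (forall xs (t : 'I_n.+1 -> R), simplex t -> 0 <= maxI (mixture f t xs)) ->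
  mixtures_nonneg_coord f n.+1.
Proof.
move=> maxI_ge0 w xs w_ge0; pose s := \sum_j w j.
have [s0|s_neq0] := eqVneq s 0.
  exists ord0; rewrite /mixture big1 // => j _.
  by rewrite (psumr_eq0P (fun i _ => w_ge0 i) s0) ?mul0r.
have s_gt0 : 0 < s by rewrite lt_def s_neq0 sumr_ge0.
have [|i mix_ge0] := exists_ge0_of_maxI (maxI_ge0 xs (fun j => w j / s) _).
  by split=> [j|]; [rewrite divr_ge0 // ltW | rewrite -mulr_suml divff].
exists i; move: mix_ge0; rewrite /mixture.
under eq_bigr do rewrite mulrAC.
by rewrite -mulr_suml pmulr_lge0 // invr_gt0.
Qed.

Lemma simplex_separation_of_mixtures (x0 : X) n (f : 'I_n.+1 -> X -> R) :
  mixtures_nonneg_coord f n.+1 ->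
  exists2 l, simplex l & forall x, 0 <= \sum_i l i * f i x.
Proof.
move=> f_nonneg.
pose C c := exists k (w : 'I_k -> R) xs, (forall j, 0 <= w j) /\ c =1 mixture f w xs.
have C_conic : conic C.
  move=> a b c d a_gt0 b_gt0 [k [w [xs [w_ge0 cw]]]] [k' [w' [xs' [w'_ge0 dw']]]].
  exists (k + k')%N, (join_fun (fun j => a * w j) (fun j => b * w' j)), (join_fun xs xs').
  split=> [j|i]; last by rewrite mixture_join cw dw'.
  by rewrite /join_fun; case: split => j'; apply: mulr_ge0 => //; apply: ltW.
have C_nonneg c : C c -> exists i, 0 <= c i.
  move=> [k [w [xs [w_ge0 cw]]]].
  have [i mix_ge0] := mixtures_nonneg_coord_all x0 f_nonneg xs w_ge0.
  by exists i; rewrite cw.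
have [l l_simplex l_sep] := orthant_separation C_conic C_nonneg.
exists l => // x; have := l_sep (mixture f (fun _ : 'I_1 => 1) (fun=> x)).
rewrite /mixture; under eq_bigr do rewrite big_ord1 mul1r.
by apply; exists 1%N, (fun=> 1), (fun=> x); split=> // [_|_]; rewrite ?ler01.
Qed.

End SimplexMixtures.

Theorem theorem2p2 (R : realType) (X : Type) (x0 : X) (m : nat)
    (f : 'I_m.+1 -> X -> R) :
  (exists l : 'I_m.+1 -> R, simplex l /\
     forall x : X, 0 <= \sum_(i < m.+1) l i * f i x)
  <->
  (forall (xs : 'I_m.+1 -> X) (t : 'I_m.+1 -> R), simplex t ->
     0 <= maxI (fun i : 'I_m.+1 => \sum_(j < m.+1) t j * f i (xs j))).
Proof.
split=> [[l [l_simplex l_sep]] xs t [t_ge0 _]|maxI_ge0].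
  exact: maxI_mixture_ge0 l_simplex l_sep t_ge0.
have [l l_simplex l_sep] :=
  simplex_separation_of_mixtures x0 (mixtures_nonneg_coord_of_maxI maxI_ge0).
by exists l.
Qed.
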